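(* For $n\geq5$, \[\frac{\lceil (n-1)/2\rceil - \lfloor (n-1)/2\rfloor}{\lceil (n-1)/2\rceil} + \frac{\lfloor (n+1)/2\rfloor}{\lceil (n+1)/2\rceil}\leq \frac{\ell_{n}(n)}{\ell_{n-1}(n)}\leq \frac{n+1}{n}.\]
   Context: For $0\leq i\leq 2n$, $\ell_i(n)$ denotes the number of vectors in $\{0,1,2\}^n$ whose coordinates sum to $i$. *)

From HB Require Import structures.
From mathcomp Require Import all_boot all_order all_algebra.
Set Implicit Arguments. Unset Strict Implicit. Unset Printing Implicit Defensive.
Import Order.TTheory GRing.Theory Num.Theory.

Definition ell (i n : nat) : nat :=
  #|[set v : {ffun 'I_n -> 'I_3} | (\sum_(j < n) (v j : nat))%N == i]|.

Definition floor2 (m : nat) : nat := m./2.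
Definition ceil2 (m : nat) : nat := uphalf m.

From HB Require Import structures.
From mathcomp Require Import all_boot all_order all_algebra.
From mathcomp Require Import ring lra zify.
Set Implicit Arguments.
Unset Strict Implicit.
Unset Printing Implicit Defensive.

Import Order.TTheory GRing.Theory Num.Theory.
Local Open Scope ring_scope.

(* Let T_n and L_n be the coefficients of x^n and x^(n-1) in (1 + x + x^2)^n,
   so that ell n n = T_n and ell (n-1) n = L_n.  Differentiating (1 + x + x^2)^n
   gives a linear relation between three consecutive coefficients of a row;
   with Pascal's rule it yields the symmetry of each row about its centre and
   the recurrences T_(n+1) = T_n + 2 L_n and
   (n + 2) L_(n+1) = 2 (n + 1) T_n + (n + 1) L_n.
   By induction L_n <= T_n <= (n + 1)/n L_n, which is the upper bound, and
   also the lower bound for odd n (the left-hand side is then 1).  For n = 2k,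
   one step of the recurrences from row 2k - 1 turns (2k - 1) T <= 2k L into
   T_(2k) / L_(2k) >= 1/k + k/(k + 1), with slack (2k - 5) T, so k >= 3. *)

Definition trinomial : {poly rat} := 1 + 'X + 'X^2.
Definition tcoef (n i : nat) : rat := (trinomial ^+ n)`_i.

Lemma natr_ell i n : (ell i n)%:R = tcoef n i.
Proof.
rewrite /tcoef.
have -> : trinomial = \sum_(k < 3) 'X^k.
  by rewrite !big_ord_recl big_ord0 /= addr0 expr0 expr1 addrA.
rewrite -[n in _ ^+ n]card_ord -prodr_const bigA_distr_bigA /= coef_sum.
under eq_bigr => v _ do rewrite prodrXr coefXn.
rewrite /ell -sum1_card natr_sum big_mkcond /=.
by apply: eq_bigr => v _; rewrite inE eq_sym; case: (_ == _).
Qed.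

Lemma coefM_trinomial p i : (p * trinomial)`_i.+2 = p`_i.+2 + p`_i.+1 + p`_i.
Proof. by rewrite !mulrDr mulr1 expr2 mulrA !coefD !coefMX. Qed.

Lemma tcoefS n i : tcoef n.+1 i.+2 = tcoef n i.+2 + tcoef n i.+1 + tcoef n i.
Proof. by rewrite /tcoef exprSr coefM_trinomial. Qed.

(* Coefficient of x^(j+2) in (P^n)' P = n P^n P', where P = trinomial. *)
Lemma tcoef_deriv_rel n j :
  (j + 3)%:R * tcoef n j.+3 + (j + 2)%:R * tcoef n j.+2 + (j + 1)%:R * tcoef n j.+1
  = n%:R * tcoef n j.+2 + (2 * n)%:R * tcoef n j.+1.
Proof.
have E : (trinomial ^+ n)^`() * trinomial = trinomial ^+ n * trinomial^`() *+ n.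
  rewrite deriv_exp; case: n => [|n]; first by rewrite !mulr0n mul0r.
  by rewrite mulrnAl -mulrA -exprSr mulrC.
have dT : trinomial^`() = 1 + 'X *+ 2.
  by rewrite !derivD derivC derivX derivXn add0r expr1.
move/(congr1 (fun p : {poly rat} => p`_j.+2)): E.
rewrite dT coefM_trinomial !coef_deriv coefMn mulrDr mulr1 coefD mulrnAr coefMn coefMX /=.
by rewrite /tcoef !mulr_natl !addn3 !addn2 !addn1 => ->; rewrite mulrnDl -mulrnA mulnC.
Qed.

Lemma tcoef_central_sym n : tcoef n.+2 n.+3 = tcoef n.+2 n.+1.
Proof.
have := tcoef_deriv_rel n.+2 n.
rewrite !natrD !natrM; set N := (n%:R : rat) => E.
have hN : N + 3 != 0 by rewrite lt0r_neq0 // ltr_wpDl ?ler0n.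
apply: (mulfI hN); nra.
Qed.

Definition central (n : nat) : rat := tcoef n n.
Definition subcentral (n : nat) : rat := tcoef n n.-1.

Lemma centralS n : (2 <= n)%N -> central n.+1 = central n + 2 * subcentral n.
Proof.
by case: n => [|[|n]] // _; rewrite /central /subcentral tcoefS tcoef_central_sym /=; ring.
Qed.

(* By symmetry of row n+1, L_(n+1) = a_(n,n+2) + a_(n,n+1) + a_(n,n); the
   derivative relation eliminates a_(n,n+2). *)
Lemma subcentralS n : (2 <= n)%N ->
  (n%:R + 2) * subcentral n.+1 = 2 * (n%:R + 1) * central n + (n%:R + 1) * subcentral n.
Proof.
case: n => [|[|n]] // _.
rewrite /central /subcentral /= -tcoef_central_sym tcoefS tcoef_central_sym.
have := tcoef_deriv_rel n.+2 n.+1.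
rewrite tcoef_central_sym !natrD !natrM -!natr1 => E.
nra.
Qed.

Lemma central2 : central 2 = 3.
Proof.
rewrite /central /tcoef expr2 coefM !big_ord_recl big_ord0 /=.
by rewrite !coefD !coef1 !coefX !coefXn /=; lra.
Qed.

Lemma subcentral2 : subcentral 2 = 2.
Proof.
rewrite /subcentral /tcoef expr2 coefM !big_ord_recl big_ord0 /=.
by rewrite !coefD !coef1 !coefX !coefXn /=; lra.
Qed.

Lemma central_subcentral_bounds n : (2 <= n)%N ->
  [/\ 0 < subcentral n, subcentral n <= central n
    & n%:R * central n <= (n%:R + 1) * subcentral n].
Proof.
elim: n => // n IH; rewrite ltnS leq_eqVlt => /orP[/eqP<-|n_ge2].
  by rewrite central2 subcentral2; split; lra.
have [L_gt0 L_le_T T_le_L] := IH n_ge2.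
have := subcentralS n_ge2; rewrite (centralS n_ge2) -[n.+1%:R]natr1.
move: L_gt0 L_le_T T_le_L.
set N := (n%:R : rat); set T := central n; set L := subcentral n.
set L' := subcentral n.+1 => L_gt0 L_le_T T_le_L LS.
have N_ge2 : 2 <= N by rewrite (ler_nat _ 2).
have N2_gt0 : 0 < N + 2 by lra.
split.
- by rewrite -(pmulr_rgt0 _ N2_gt0) LS; nra.
- by rewrite -(ler_pM2l N2_gt0) LS; nra.
- nra.
Qed.

Lemma next_ratio_lower_bound (R : realFieldType) (N k T L T' L' : R) :
  N + 1 = 2 * k -> 3 <= k -> 0 < L -> L <= T -> N * T <= (N + 1) * L ->
  T' = T + 2 * L -> (N + 2) * L' = 2 * (N + 1) * T + (N + 1) * L ->
  1 / k + k / (k + 1) <= T' / L'.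
Proof.
move=> Nk k_ge3 L_gt0 L_le_T T_le_L -> LS.
have L'_gt0 : 0 < L' by rewrite -(pmulr_rgt0 _ (_ : 0 < N + 2)) ?LS; nra.
have -> : 1 / k + k / (k + 1) = (k ^+ 2 + k + 1) / (k * (k + 1)).
  by field; rewrite !lt0r_neq0 //; lra.
rewrite ler_pdivlMr // mulrAC ler_pdivrMr ?mulr_gt0 //; try lra.
rewrite -(ler_pM2l (_ : 0 < N + 2)); last lra.
rewrite mulrCA LS.
have -> : N = 2 * k - 1 by lra.
have slack_L : 0 <= k * (k + 2) * (2 * k * L - (2 * k - 1) * T).
  by apply: mulr_ge0; nra.
have slack_T : 0 <= k * (2 * k - 5) * T by apply: mulr_ge0; nra.
nra.
Qed.

Lemma central_ratio_le n : (2 <= n)%N ->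
  central n / subcentral n <= (n%:R + 1) / n%:R.
Proof.
move=> n_ge2; have [L_gt0 _ T_le_L] := central_subcentral_bounds n_ge2.
have n_gt0 : 0 < n%:R :> rat by rewrite ltr0n; apply: leq_trans n_ge2.
by rewrite ler_pdivrMr // mulrAC ler_pdivlMr // mulrC.
Qed.

Lemma central_ratio_ge1 n : (2 <= n)%N -> 1 <= central n / subcentral n.
Proof.
by move=> /central_subcentral_bounds[L_gt0 L_le_T _]; rewrite ler_pdivlMr // mul1r.
Qed.

Lemma central_ratio_ge_even k : (3 <= k)%N ->
  1 / k%:R + k%:R / (k%:R + 1) <= central k.*2 / subcentral k.*2.
Proof.
case: k => // k k_ge3; rewrite doubleS.
have n_ge2 : (2 <= k.*2.+1)%N by rewrite -mul2n; lia.
have [L_gt0 L_le_T T_le_L] := central_subcentral_bounds n_ge2.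
apply: (next_ratio_lower_bound _ _ L_gt0 L_le_T T_le_L).
- by rewrite natr1 -doubleS -mul2n natrM.
- by rewrite ler_nat.
- exact: centralS.
- exact: subcentralS.
Qed.

Theorem mainTheorem17 (n : nat) (hn : (5 <= n)%N) :
  ((ceil2 (n - 1))%:R - (floor2 (n - 1))%:R) / (ceil2 (n - 1))%:R
    + (floor2 (n + 1))%:R / (ceil2 (n + 1))%:R
    <= (ell n n)%:R / (ell (n - 1) n)%:R :> rat
  /\ (ell n n)%:R / (ell (n - 1) n)%:R <= (n + 1)%:R / n%:R :> rat.
Proof.
have n_ge2 : (2 <= n)%N by apply: leq_trans hn.
rewrite !natr_ell subn1 -[tcoef n n]/(central n) -[tcoef n n.-1]/(subcentral n).
split; last by rewrite natrD; apply: central_ratio_le.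
rewrite /ceil2 /floor2 addn1.
have [[k n_even]|[k n_odd]] : (exists k, n = k.*2) \/ (exists k, n = k.*2.+1).
  by rewrite -(odd_double_half n); case: odd; [right|left]; exists n./2.
- have k_ge3 : (3 <= k)%N by move: hn; rewrite n_even -mul2n; lia.
  case: k n_even k_ge3 => // k -> k_ge3.
  rewrite doubleS /= uphalf_double doubleK.
  have -> : k.+1%:R - k%:R = 1 :> rat by rewrite -natr1 addrAC subrr add0r.
  by rewrite -[k.+2%:R]natr1; apply: central_ratio_ge_even.
- rewrite n_odd /= uphalf_double doubleK subrr mul0r add0r divff ?pnatr_eq0 //.
  by apply: central_ratio_ge1; rewrite -n_odd.
Qed.
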